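(* Let $|\psi\rangle$ be a state on $\mathbb{C}^R\otimes(\mathbb{C}^\kappa\otimes\mathbb{C}^R)\otimes\mathbb{C}^\kappa$ (registers 1,2,3,4; $A$ = register 1, $B$ = registers 2,3, $C$ = register 4) such that $\mathrm{Tr}_A(|\psi\rangle\langle\psi|)$ is separable across $B|C$. Suppose $\mathsf{Density}$ and $\mathsf{MatchCheck}$ succeed on $|\psi\rangle$ with probability $\frac1\kappa-d_{\mathsf D}$ and $1-d_{\mathsf M}$ respectively. Then there exists a state $|\chi\rangle$ that is rigid after applying $\mathrm{CNOT}_{1,3}\mathrm{CNOT}_{2,4}$ such that $$|\langle\chi|\psi\rangle|^2\ge 1-\kappa d_{\mathsf D}-(\kappa+1)\sqrt{(\kappa+1)d_{\mathsf M}}.$$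
   Context: $\mathrm{CNOT}_{i,j}$ maps $|x\rangle_i|y\rangle_j\mapsto|x\rangle_i|y\oplus x\rangle_j$ with addition modulo the register dimension. $\mathsf{MatchCheck}$ measures all registers in the computational basis, obtaining $(v,c,w,d)$, and accepts iff $(v,c)=(w,d)$. $\mathsf{Density}$ applies $\mathrm{CNOT}_{1,3}\mathrm{CNOT}_{2,4}$ and then measures the first two registers in the Hadamard basis, accepting iff they are in the uniform superposition state; equivalently it accepts with probability $|\langle +'|\psi\rangle|^2$ where $|+'\rangle=\mathrm{CNOT}_{1,3}\mathrm{CNOT}_{2,4}\big(\tfrac{1}{\sqrt{R\kappa}}\sum_{v\in[R],c\in[\kappa]}|v\rangle|c\rangle\big)|0\rangle|0\rangle$. A state is ''rigid after applying $\mathrm{CNOT}_{1,3}\mathrm{CNOT}_{2,4}$'' if it has the form $\frac1{\sqrt R}\sum_{v\in[R]}|v\rangle|c_v\rangle|v\rangle|c_v\rangle$ for some indices $c_v\in[\kappa]$. *)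

(* Amplitudes live in an arbitrary numeric closed field C
   (e.g. the complex numbers), with conjugation ^* and sqrtC. *)
From HB Require Import structures.
From mathcomp Require Import all_boot all_order all_algebra.
Set Implicit Arguments. Unset Strict Implicit. Unset Printing Implicit Defensive.
Import Order.TTheory GRing.Theory Num.Theory.
Local Open Scope ring_scope.

Section Q.
Variable C : numClosedFieldType.
Variables R k : nat.

(* basis labels (v,c,w,d) of registers 1,2,3,4 : C^R (x) C^k (x) C^R (x) C^k *)
Definition Reg := ('I_R * 'I_k * 'I_R * 'I_k)%type.
Definition vec := Reg -> C.

Definition addmod n (y x : 'I_n) : 'I_n :=
  Ordinal (ltn_pmod (y + x) (leq_ltn_trans (leq0n x) (ltn_ord x))).

Definition cnot13_basis (z : Reg) : Reg :=
  let: (v, c, w, d) := z in (v, c, addmod w v, d).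
Definition cnot24_basis (z : Reg) : Reg :=
  let: (v, c, w, d) := z in (v, c, w, addmod d c).

Definition push (f : Reg -> Reg) (phi : vec) : vec :=
  fun z => \sum_(b | f b == z) phi b.

Definition inner (a b : vec) : C := \sum_z (a z)^* * b z.

Definition is_state (phi : vec) : Prop := \sum_z `|phi z| ^+ 2 = 1.

Definition unif00 : vec := fun z =>
  let: (v, c, w, d) := z in
  (sqrtC (R * k)%:R)^-1 * (val w == 0%N)%:R * (val d == 0%N)%:R.

Definition plus' : vec := push cnot13_basis (push cnot24_basis unif00).

Definition probDensity (psi : vec) : C := `|inner plus' psi| ^+ 2.

Definition probMatchCheck (psi : vec) : C :=
  \sum_(z : Reg | (z.1.1.1 == z.1.2) && (z.1.1.2 == z.2)) `|psi z| ^+ 2.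

(* rigid after applying CNOT_{1,3} CNOT_{2,4} :
   (1/sqrt R) sum_v |v>|c_v>|v>|c_v> *)
Definition rigid (chi : vec) : Prop :=
  exists cv : 'I_R -> 'I_k,
    chi = fun z => \sum_(v : 'I_R) (sqrtC R%:R)^-1 * (z == (v, cv v, v, cv v))%:R.

Definition psd (T : finType) (M : T -> T -> C) : Prop :=
  forall x : T -> C, 0 <= \sum_i \sum_j (x i)^* * M i j * x j.
Definition density (T : finType) (M : T -> T -> C) : Prop :=
  psd M /\ \sum_i M i i = 1.

(* Tr_A |psi><psi|, on B = registers 2,3 and C = register 4 *)
Definition TB := ('I_k * 'I_R)%type.
Definition rhoBC (psi : vec) (x y : (TB * 'I_k)%type) : C :=
  \sum_(v : 'I_R) psi (v, x.1.1, x.1.2, x.2) * (psi (v, y.1.1, y.1.2, y.2))^*.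

Definition separableBC (rho : (TB * 'I_k)%type -> (TB * 'I_k)%type -> C) : Prop :=
  exists (n : nat) (p : 'I_n -> C) (sB : 'I_n -> TB -> TB -> C)
         (sC : 'I_n -> 'I_k -> 'I_k -> C),
    [/\ forall i, 0 <= p i, \sum_i p i = 1,
        forall i, density (sB i), forall i, density (sC i) &
        forall x y, rho x y = \sum_i p i * (sB i x.1 y.1 * sC i x.2 y.2)].
End Q.

(** Write a(u,c) = psi(u,c,u,c).  Density accepts with probability |S|^2/(R k) for
    S = sum_(u,c) a(u,c), and the rigid state with labels c_u has overlap |T|^2/R for
    T = sum_u a(u,c_u); take c_u maximising |a(u,c)|.  By Cauchy-Schwarz over u, |S|^2 is
    at most R times sum |a(u,c)|^2 <= 1 plus the cross terms
    sum_u sum_(c <> c') |a(u,c)| |a(u,c')|, and by maximality of c_u the cross terms alone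
    bound |S - T|^2 / R.  Separability controls the cross terms: for a product state
    sigma_B (x) sigma_C the coherence between |b,c> and |b',c'> is at most the mean of the
    populations of |b,c'> and |b',c> (2x2 minors of PSD matrices and AM-GM), and the
    populations reached this way from (c,u,c) and (c',u,c') are MatchCheck failures.  So the
    cross terms are at most k d_M, and |S|^2 - |T|^2 <= 2 |S| |S - T| finishes. *)

From HB Require Import structures.
From mathcomp Require Import all_boot all_order all_algebra.
From mathcomp Require Import ring zify.
Import Order.TTheory GRing.Theory Num.Theory.
Set Implicit Arguments.
Unset Strict Implicit.
Unset Printing Implicit Defensive.
Local Open Scope ring_scope.

Section PositiveSemidefinite.
Variables (C : numClosedFieldType) (T : finType).

Lemma sumr_mul_pair (F : T -> C) x y (a b : C) :
  \sum_i F i * ((i == x)%:R * a + (i == y)%:R * b) = F x * a + F y * b.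
Proof.
have delta z : \sum_i F i * (i == z)%:R = F z.
  by rewrite (bigD1 z) //= eqxx mulr1 big1 ?addr0 // => i /negbTE ->; rewrite mulr0.
rewrite -[F x](delta x) -[F y](delta y) !mulr_suml -big_split /=.
by apply: eq_bigr => i _; ring.
Qed.

Variable M : T -> T -> C.
Hypothesis psdM : psd M.

Lemma psd_pair x y (a b : C) :
  0 <= a^* * (M x x * a + M x y * b) + b^* * (M y x * a + M y y * b).
Proof.
have := psdM (fun i => (i == x)%:R * a + (i == y)%:R * b).
under eq_bigr do under eq_bigr do rewrite -mulrA.
under eq_bigr do rewrite -mulr_sumr sumr_mul_pair.
under eq_bigr do rewrite mulrC !rmorphD !rmorphM /= !conjC_nat.
by rewrite sumr_mul_pair ![_ * a^*]mulrC ![_ * b^*]mulrC.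
Qed.

Lemma psd_diag_ge0 x : 0 <= M x x.
Proof. by have := psd_pair x x 1 0; rewrite conjC0 conjC1 !mul0r !mulr0 !addr0 !mulr1 mul1r. Qed.

Lemma psd_hermitian x y : M y x = (M x y)^*.
Proof.
have real_pair a b : a^* * (M x x * a + M x y * b) + b^* * (M y x * a + M y y * b) \is Num.real.
  exact/ger0_real/psd_pair.
have Mxx_real := ger0_real (psd_diag_ge0 x); have Myy_real := ger0_real (psd_diag_ge0 y).
set s := M x y; set t := M y x.
have conj_sum : (s + t)^* = s + t.
  apply/CrealP; have := real_pair 1 1; rewrite conjC1 !mul1r !mulr1 => h.
  have -> : s + t = (M x x + s + (t + M y y)) - M x x - M y y by ring.
  by rewrite !rpredB.
have conj_idiff : ('i * (s - t))^* = 'i * (s - t).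
  apply/CrealP; have := real_pair 1 'i; rewrite conjC1 conjCi !mul1r !mulr1 => h.
  have -> : 'i * (s - t) = (M x x + s * 'i + - 'i * (t + M y y * 'i)) - M x x - M y y.
    have ii : 'i * 'i = -1 :> C by rewrite -expr2 sqrCi.
    transitivity (M x x + s * 'i - 'i * t - M y y * ('i * 'i) - M x x - M y y); last by ring.
    by rewrite ii; ring.
  by rewrite !rpredB.
rewrite rmorphD in conj_sum; rewrite rmorphM rmorphB /= conjCi in conj_idiff.
have conj_diff : s^* - t^* = t - s.
  by apply: (mulfI (neq0Ci C)); apply: oppr_inj; rewrite -mulNr conj_idiff; ring.
have -> : t = (s + t + (t - s)) / 2%:R by field.
by rewrite -conj_sum -conj_diff; field.
Qed.

Lemma psd_norm_sqr_le x y : `|M x y| ^+ 2 <= M x x * M y y.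
Proof.
have hA := psd_diag_ge0 x; have hB := psd_diag_ge0 y.
have form := psd_pair x y; rewrite (psd_hermitian x y) in form.
rewrite normCK; set A := M x x in hA form *; set B := M y y in hB form *.
set s := M x y in form *.
have [B_gt0|] := boolP (0 < B).
  have := form B (- s^*); rewrite (conj_Creal (ger0_real hB)) rmorphN /= conjCK.
  have -> : B * (A * B + s * - s^*) + - s * (s^* * B + B * - s^*) = B * (A * B - s * s^*) by ring.
  by rewrite pmulr_rge0 // subr_ge0 mulrC.
rewrite lt_def hB andbT negbK => /eqP B0.
have [A_gt0|] := boolP (0 < A).
  have := form (- s) A; rewrite (conj_Creal (ger0_real hA)) rmorphN /=.
  have -> : - s^* * (A * - s + s * A) + A * (s^* * - s + B * A) = A * (A * B - s * s^*) by ring.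
  by rewrite pmulr_rge0 // subr_ge0 mulrC.
rewrite lt_def hA andbT negbK => /eqP A0.
have := form 1 (- s^*); rewrite conjC1 rmorphN /= conjCK A0 B0.
have -> : 1 * (0 * 1 + s * - s^*) + - s * (s^* * 1 + 0 * - s^*) = - (s * s^*) *+ 2 by ring.
by rewrite mul0r pmulrn_lge0 // oppr_ge0.
Qed.

End PositiveSemidefinite.

Lemma sqr_sum_offdiag (R : comPzSemiRingType) (I : finType) (f : I -> R) :
  (\sum_i f i) ^+ 2 = \sum_i f i ^+ 2 + \sum_i \sum_(j | j != i) f i * f j.
Proof.
rewrite expr2 mulr_suml -big_split /=; apply: eq_bigr => i _.
by rewrite mulr_sumr (bigD1 i) //= expr2.
Qed.

Section RealInequalities.
Variable F : numFieldType.

Lemma mul_le_cross_mean (P Q a b c d : F) :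
  0 <= P -> 0 <= Q -> 0 <= a -> 0 <= b -> 0 <= c -> 0 <= d ->
  P ^+ 2 <= a * b -> Q ^+ 2 <= c * d -> P * Q <= (a * d + b * c) / 2%:R.
Proof.
move=> P0 Q0 a0 b0 c0 d0 hP hQ.
rewrite -(ler_pXn2r (n := 2)) // ?nnegrE ?mulr_ge0 ?divr_ge0 ?addr_ge0 ?mulr_ge0
  ?invr_ge0 ?ler0n //.
apply: (le_trans (y := (a * d) * (b * c))).
  rewrite exprMn (_ : a * d * (b * c) = (a * b) * (c * d)); last by ring.
  by apply: ler_pM; rewrite ?exprn_ge0.
by apply/Order.le_of_leif/real_leif_AGM2; apply/ger0_real/mulr_ge0.
Qed.

Lemma sqr_sum_le_card (I : finType) (x : I -> F) : (forall i, x i \is Num.real) ->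
  (\sum_i x i) ^+ 2 <= #|I|%:R * \sum_i x i ^+ 2.
Proof.
move=> x_real.
have row i : \sum_j (x i - x j) ^+ 2 =
    #|I|%:R * x i ^+ 2 - (x i * \sum_j x j) *+ 2 + \sum_j x j ^+ 2.
  under eq_bigr do rewrite sqrrB.
  by rewrite big_split /= sumrB sumr_const mulr_natl mulr_sumr sumrMnl.
rewrite -subr_ge0.
have -> : #|I|%:R * \sum_i x i ^+ 2 - (\sum_i x i) ^+ 2 =
    (\sum_i \sum_j (x i - x j) ^+ 2) / 2%:R.
  under [in RHS]eq_bigr do rewrite row.
  rewrite big_split /= sumrB -mulr_sumr sumr_const sumrMnl -mulr_suml.
  by rewrite -(mulr_natl (\sum_j _)) expr2; field.
rewrite divr_ge0 ?ler0n //.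
by apply: sumr_ge0 => i _; apply: sumr_ge0 => j _; rewrite -realEsqr rpredB.
Qed.

Lemma sqr_sum_off_max_le (I : finType) (f : I -> F) m :
  (forall i, 0 <= f i) -> (forall i, f i <= f m) ->
  (\sum_(i | i != m) f i) ^+ 2 <= \sum_i \sum_(j | j != i) f i * f j.
Proof.
move=> f_ge0 f_le_m.
rewrite expr2 mulr_suml [leRHS](bigD1 m) //= -[X in X <= _]add0r.
apply: lerD; first by apply: sumr_ge0 => j _; apply: mulr_ge0.
apply: ler_sum => i im; rewrite mulr_sumr.
rewrite [leLHS](bigD1 i) //= [leRHS](bigD1 m) 1?eq_sym //= lerD ?ler_wpM2l //.
by rewrite le_eqVlt; apply/orP; left; apply/eqP/eq_bigl => j; rewrite andbC.
Qed.

Lemma sqr_le_sub_cross (s e t : F) : 0 <= s -> 0 <= e -> 0 <= t -> s - e <= t ->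
  s ^+ 2 - (s * e) *+ 2 <= t ^+ 2.
Proof.
move=> s0 e0 t0 h.
have [se|es] := real_leP (ger0_real s0) (ger0_real e0).
  apply: (le_trans (y := 0)); last exact: exprn_ge0.
  rewrite (_ : _ - _ = s * (s - e *+ 2)); last by rewrite mulrBr mulrnAr expr2.
  by rewrite mulr_ge0_le0 // subr_le0 mulr2n (le_trans se) ?lerDl.
apply: (le_trans (y := (s - e) ^+ 2)); first by rewrite sqrrB lerDl exprn_ge0.
by rewrite ler_pXn2r // nnegrE subr_ge0 ltW.
Qed.

Lemma ler_sum_term (I : finType) (f : I -> F) i :
  (forall j, 0 <= f j) -> f i <= \sum_j f j.
Proof. by move=> f_ge0; rewrite (bigD1 i) //= lerDl sumr_ge0. Qed.

Lemma sqr_le_card_sum_sqr (I : finType) (x : F) (g : I -> F) :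
  0 <= x -> (forall i, 0 <= g i) -> x <= \sum_i g i ->
  x ^+ 2 <= #|I|%:R * \sum_i g i ^+ 2.
Proof.
move=> x_ge0 g_ge0 x_le; apply: le_trans (sqr_sum_le_card (fun i => ger0_real (g_ge0 i))).
by rewrite ler_pXn2r // nnegrE sumr_ge0.
Qed.

End RealInequalities.

Lemma separable_offdiag_le (C : numClosedFieldType) (R k : nat)
    (rho : (TB R k * 'I_k)%type -> (TB R k * 'I_k)%type -> C) b b' c c' :
  separableBC rho ->
  `|rho (b, c) (b', c')| <= (rho (b, c') (b, c') + rho (b', c) (b', c)) / 2%:R.
Proof.
case=> n [p [sB [sC [p_ge0 _ sB_dens sC_dens rhoE]]]]; rewrite !rhoE /=.
rewrite -big_split /= mulr_suml; apply: le_trans (ler_norm_sum _ _ _) _.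
apply: ler_sum => i _; rewrite normrM (ger0_norm (p_ge0 i)) -mulrDr -mulrA.
rewrite ler_wpM2l // normrM.
have [psdB _] := sB_dens i; have [psdC _] := sC_dens i.
by apply: mul_le_cross_mean; rewrite ?normr_ge0 ?psd_diag_ge0 ?psd_norm_sqr_le.
Qed.

Lemma sum_offdiag_symmetrize (F : numFieldType) (I : finType) (G : I -> I -> F) :
  \sum_i \sum_(j | j != i) (G i j + G j i) / 2%:R = \sum_i \sum_(j | j != i) G i j.
Proof.
have swap : \sum_i \sum_(j | j != i) G j i = \sum_i \sum_(j | j != i) G i j.
  rewrite (exchange_big_dep xpredT) //=.
  by apply: eq_bigr => i _; apply: eq_bigl => j; rewrite eq_sym.
under eq_bigr do rewrite -mulr_suml big_split /=.
by rewrite -mulr_suml big_split /= swap; field.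
Qed.

Section Amplitudes.
Variables (C : numClosedFieldType) (R k : nat) (psi : vec C R k).

Definition weight (z : Reg R k) : C := `|psi z| ^+ 2.
Definition amp (u : 'I_R) (c : 'I_k) : C := psi (u, c, u, c).
Definition matched (z : Reg R k) := (z.1.1.1 == z.1.2) && (z.1.1.2 == z.2).
Definition mismatch : C := \sum_(z | ~~ matched z) weight z.

Definition marginal (w : 'I_R) (c d : 'I_k) : C := \sum_v weight (v, c, w, d).
Definition mismatch13 (w : 'I_R) (c : 'I_k) : C := \sum_(v | v != w) weight (v, c, w, c).

Lemma weight_ge0 z : 0 <= weight z. Proof. exact: exprn_ge0. Qed.

Lemma sum_Reg (F : Reg R k -> C) :
  \sum_z F z = \sum_v \sum_c \sum_w \sum_d F (v, c, w, d).
Proof.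
have sum_pair (I J : finType) (G : I * J -> C) : \sum_p G p = \sum_i \sum_j G (i, j).
  by rewrite pair_bigA; apply: eq_bigr => -[].
by rewrite !sum_pair.
Qed.

Lemma mismatch_split :
  mismatch = \sum_w \sum_c \sum_(d | d != c) marginal w c d + \sum_w \sum_c mismatch13 w c.
Proof.
rewrite /mismatch big_mkcond sum_Reg.
under eq_bigr do rewrite exchange_big.
rewrite exchange_big -big_split; apply: eq_bigr => w _.
rewrite exchange_big -big_split; apply: eq_bigr => c _ /=.
rewrite exchange_big (bigD1 c) //= addrC; congr (_ + _).
  apply: eq_bigr => d dc; apply: eq_bigr => v _.
  by rewrite /matched /= (eq_sym c d) (negbTE dc) andbF.
by rewrite /mismatch13 [RHS]big_mkcond; apply: eq_bigr => v _; rewrite /matched /= eqxx andbT.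
Qed.

Lemma rhoBC_diag x : rhoBC psi x x = \sum_v weight (v, x.1.1, x.1.2, x.2).
Proof. by apply: eq_bigr => v _; rewrite /weight normCK. Qed.

Hypothesis psi_sep : separableBC (rhoBC psi).

Lemma amp_norm_mul_le u c c' :
  `|amp u c| * `|amp u c'| <=
    (marginal u c c' + marginal u c' c) / 2%:R + (mismatch13 u c + mismatch13 u c') / 2%:R.
Proof.
set rest := \sum_(v | v != u) psi (v, c, u, c) * (psi (v, c', u, c'))^*.
have -> : `|amp u c| * `|amp u c'| = `|rhoBC psi ((c, u), c) ((c', u), c') - rest|.
  by rewrite /rhoBC (bigD1 u) //= addrK normrM norm_conjC.
apply: le_trans (ler_normB _ _) _; apply: lerD.
  by have := separable_offdiag_le (c, u) (c', u) c c' psi_sep; rewrite !rhoBC_diag.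
apply: le_trans (ler_norm_sum _ _ _) _.
rewrite -big_split /= mulr_suml; apply: ler_sum => v _; rewrite normrM norm_conjC.
exact/Order.le_of_leif/real_leif_mean_square/normr_real/normr_real.
Qed.

Definition cross (u : 'I_R) : C := \sum_c \sum_(c' | c' != c) `|amp u c| * `|amp u c'|.

Hypothesis k_gt0 : (0 < k)%N.

Lemma sum_cross_le : \sum_u cross u <= k%:R * mismatch.
Proof.
rewrite mismatch_split.
set marg_total := \sum_w _; set mis13_total := \sum_w _.
have marg_total_ge0 : 0 <= marg_total.
  by do 4 (apply: sumr_ge0 => ? _); apply: weight_ge0.
apply: (le_trans (y := marg_total + k%:R * mis13_total)); last first.
  by rewrite mulrDr lerD2r ler_peMl // ler1n.
rewrite /marg_total /mis13_total mulr_sumr -big_split; apply: ler_sum => u _.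
apply: (le_trans (y := \sum_c \sum_(c' | c' != c)
   ((marginal u c c' + marginal u c' c) / 2%:R + (mismatch13 u c + mismatch13 u c') / 2%:R))).
  by apply: ler_sum => c _; apply: ler_sum => c' _; apply: amp_norm_mul_le.
under eq_bigr do rewrite big_split /=.
rewrite big_split /= sum_offdiag_symmetrize lerD2l.
rewrite (sum_offdiag_symmetrize (fun c _ => mismatch13 u c)) mulr_sumr.
apply: ler_sum => c _.
have mis13_ge0 c' : 0 <= mismatch13 u c' by apply: sumr_ge0 => v _; apply: weight_ge0.
rewrite mulr_natl -[in leRHS](card_ord k) -sumr_const.
by rewrite [leRHS](bigID (fun c' => c' != c)) /= lerDl sumr_ge0.
Qed.

Lemma mismatch_ge0 : 0 <= mismatch.
Proof. by apply: sumr_ge0 => z _; apply: weight_ge0. Qed.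

Hypothesis psi_state : is_state psi.

Lemma probMatchCheckE : probMatchCheck psi = 1 - mismatch.
Proof. by rewrite -psi_state (bigID matched) /= addrK. Qed.

Lemma mismatch_le1 : mismatch <= 1.
Proof.
by rewrite -psi_state (bigID matched) /= lerDr; apply: sumr_ge0 => z _; apply: weight_ge0.
Qed.

Lemma sum_amp_sqr_le1 : \sum_u \sum_c `|amp u c| ^+ 2 <= 1.
Proof.
rewrite -psi_state sum_Reg; apply: ler_sum => u _; apply: ler_sum => c _.
apply: le_trans (ler_sum_term u _) => [|w]; last by apply: sumr_ge0 => d _; apply: exprn_ge0.
by apply: (ler_sum_term c) => d; apply: exprn_ge0.
Qed.

Definition argmax_amp (c0 : 'I_k) (u : 'I_R) : 'I_k :=
  Order.arg_max c0 xpredT (fun c => `|amp u c|).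

Lemma argmax_ampP c0 u c : `|amp u c| <= `|amp u (argmax_amp c0 u)|.
Proof.
rewrite /argmax_amp.
have amp_real c' : c' \in xpredT -> `|amp u c'| \is Num.real by move=> _; apply: normr_real.
by case: (real_arg_maxP (P := xpredT) (F := fun c => `|amp u c|) isT amp_real) => m _; apply.
Qed.

Definition diag_sum : C := \sum_u \sum_c amp u c.

Lemma norm_diag_sum_sqr_le : `|diag_sum| ^+ 2 <= R%:R * (1 + k%:R * mismatch).
Proof.
have row_ge0 u : 0 <= \sum_c `|amp u c| by apply: sumr_ge0.
have norm_le : `|diag_sum| <= \sum_u \sum_c `|amp u c|.
  by apply: le_trans (ler_norm_sum _ _ _) _; apply: ler_sum => u _; apply: ler_norm_sum.
apply: le_trans (sqr_le_card_sum_sqr (normr_ge0 _) row_ge0 norm_le) _.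
rewrite card_ord ler_wpM2l ?ler0n //.
under eq_bigr do rewrite sqr_sum_offdiag.
by rewrite big_split lerD ?sum_amp_sqr_le1 ?sum_cross_le.
Qed.

Lemma norm_diag_sum_subr_sqr_le (cv : 'I_R -> 'I_k) :
  (forall u c, `|amp u c| <= `|amp u (cv u)|) ->
  `|diag_sum - \sum_u amp u (cv u)| ^+ 2 <= R%:R * (k%:R * mismatch).
Proof.
move=> cv_max.
have row_ge0 u : 0 <= \sum_(c | c != cv u) `|amp u c| by apply: sumr_ge0.
have norm_le : `|diag_sum - \sum_u amp u (cv u)| <= \sum_u \sum_(c | c != cv u) `|amp u c|.
  rewrite /diag_sum -sumrB; apply: le_trans (ler_norm_sum _ _ _) _; apply: ler_sum => u _.
  by rewrite (bigD1 (cv u)) //= addrC addrK ler_norm_sum.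
apply: le_trans (sqr_le_card_sum_sqr (normr_ge0 _) row_ge0 norm_le) _.
rewrite card_ord ler_wpM2l ?ler0n //; apply: le_trans sum_cross_le.
by apply: ler_sum => u _; apply: sqr_sum_off_max_le.
Qed.

End Amplitudes.

Lemma sqr_subr_sqr_le (C : numClosedFieldType) (r n : nat) (d s e t : C) :
  0 <= d -> d <= 1 -> 0 <= s -> 0 <= e -> 0 <= t -> s - e <= t ->
  s ^+ 2 <= r%:R * (1 + n%:R * d) -> e ^+ 2 <= r%:R * (n%:R * d) ->
  s ^+ 2 - t ^+ 2 <= r%:R * n.+1%:R * sqrtC (n.+1%:R * d).
Proof.
move=> d_ge0 d_le1 s_ge0 e_ge0 t_ge0 st hs he.
apply: (le_trans (y := (s * e) *+ 2)).
  by rewrite lerBlDr addrC -lerBlDr sqr_le_sub_cross.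
have sqrt_ge0 : 0 <= sqrtC (n.+1%:R * d) by rewrite sqrtC_ge0 mulr_ge0 ?ler0n.
rewrite -(ler_pXn2r (n := 2)) // ?nnegrE ?mulrn_wge0 ?mulr_ge0 ?ler0n //.
have -> : (r%:R * n.+1%:R * sqrtC (n.+1%:R * d)) ^+ 2 = r%:R ^+ 2 * d * n.+1%:R ^+ 3.
  by rewrite !exprMn sqrtCK; ring.
have nat_bound : 4%:R * n%:R * (1 + n%:R) <= n.+1%:R ^+ 3 :> C.
  have sq m : (4 * m <= m.+1 ^ 2)%N by case: m => [|m] //; nia.
  rewrite -natrX -[1 + _](natrD C 1 n) -!natrM ler_nat add1n expnS.
  by rewrite [leqLHS]mulnC leq_mul2l sq orbT.
apply: (le_trans (y := 4%:R * ((r%:R * (1 + n%:R * d)) * (r%:R * (n%:R * d))))).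
  rewrite (_ : _ ^+ 2 = 4%:R * (s ^+ 2 * e ^+ 2)); last by ring.
  by rewrite ler_wpM2l ?ler0n // ler_pM ?exprn_ge0.
rewrite (_ : 4%:R * _ = r%:R ^+ 2 * d * (4%:R * n%:R * (1 + n%:R * d))); last by ring.
rewrite ler_wpM2l ?mulr_ge0 ?exprn_ge0 //; apply: le_trans nat_bound.
by rewrite ler_wpM2l ?mulr_ge0 ?ler0n // lerD2l ler_piMr ?ler0n.
Qed.

Section Overlaps.
Variables (C : numClosedFieldType) (R k : nat).

Lemma inner_push f (phi psi : vec C R k) :
  inner (push f phi) psi = inner phi (fun z => psi (f z)).
Proof.
rewrite /inner /push [RHS](partition_big f xpredT) //=; apply: eq_bigr => z _.
by rewrite rmorph_sum /= mulr_suml; apply: eq_bigr => b /eqP <-.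
Qed.

Lemma sqr_norm_conj_invsqrtC_mul (n : nat) (x : C) :
  `|((sqrtC n%:R)^-1)^* * x| ^+ 2 = `|x| ^+ 2 / n%:R.
Proof.
have sqrt_norm : `|sqrtC (n%:R : C)| = sqrtC n%:R by rewrite ger0_norm // sqrtC_ge0 ler0n.
by rewrite normrM norm_conjC normfV sqrt_norm exprMn exprVn sqrtCK mulrC.
Qed.

Lemma probDensityE (psi : vec C R k) : (0 < R)%N -> (0 < k)%N ->
  probDensity psi = `|diag_sum psi| ^+ 2 / (R * k)%:R.
Proof.
move=> R_gt0 k_gt0; rewrite /probDensity /plus' !inner_push.
rewrite -sqr_norm_conj_invsqrtC_mul; congr (`|_| ^+ 2).
rewrite /inner sum_Reg /diag_sum mulr_sumr; apply: eq_bigr => v _.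
rewrite mulr_sumr; apply: eq_bigr => c _.
have addmod0 n (x0 x : 'I_n) : val x0 = 0%N -> addmod x0 x = x.
  by move=> x0E; apply: val_inj; rewrite /= x0E add0n modn_small.
have zero_only n (n_gt0 : (0 < n)%N) (F : 'I_n -> C) :
    \sum_(x : 'I_n) (val x == 0%N)%:R * F x = F (Ordinal n_gt0).
  rewrite (bigD1 (Ordinal n_gt0)) //= mul1r big1 ?addr0 // => x x_neq0.
  rewrite (_ : (val x == 0%N) = false) ?mul0r //.
  by apply: contraNF x_neq0 => /eqP x0; apply/eqP/val_inj.
set s := (sqrtC (R * k)%:R)^-1.
transitivity (\sum_(w : 'I_R) (val w == 0%N)%:R * \sum_(d : 'I_k) (val d == 0%N)%:R *
                (s^* * psi (v, c, addmod w v, addmod d c))).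
  apply: eq_bigr => w _; rewrite mulr_sumr; apply: eq_bigr => d _.
  by rewrite /= -/s !rmorphM /= !conjC_nat; ring.
by rewrite zero_only zero_only !addmod0.
Qed.

Definition rigid_vec (cv : 'I_R -> 'I_k) : vec C R k :=
  fun z => \sum_v (sqrtC R%:R)^-1 * (z == (v, cv v, v, cv v))%:R.

Lemma sqr_norm_inner_rigid_vec cv (psi : vec C R k) :
  `|inner (rigid_vec cv) psi| ^+ 2 = `|\sum_u amp psi u (cv u)| ^+ 2 / R%:R.
Proof.
rewrite -sqr_norm_conj_invsqrtC_mul /inner /rigid_vec; congr (`|_| ^+ 2).
under eq_bigr do rewrite rmorph_sum /= mulr_suml.
rewrite exchange_big mulr_sumr; apply: eq_bigr => v _.
rewrite (bigD1 (v, cv v, v, cv v)) //= big1 ?addr0 => [|z /negbTE ->].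
  by rewrite eqxx mulr1.
by rewrite mulr0 conjC0 mul0r.
Qed.

End Overlaps.

Theorem claim4p6 (C : numClosedFieldType) (R k : nat) (hR : (0 < R)%N) (hk : (0 < k)%N)
  (psi : vec C R k) (dD dM : C) :
  is_state psi ->
  separableBC (rhoBC psi) ->
  probDensity psi = k%:R^-1 - dD ->
  probMatchCheck psi = 1 - dM ->
  exists chi : vec C R k,
    rigid chi /\
    1 - k%:R * dD - k.+1%:R * sqrtC (k.+1%:R * dM) <= `|inner chi psi| ^+ 2.
Proof.
move=> psi_state psi_sep hD hM.
pose cv := argmax_amp psi (Ordinal hk).
exists (rigid_vec C cv); split; first by exists cv.
have -> : dM = mismatch psi.
  by apply/oppr_inj/(addrI 1); rewrite -hM probMatchCheckE.
have -> : k%:R * dD = 1 - `|diag_sum psi| ^+ 2 / R%:R.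
  have -> : dD = k%:R^-1 - `|diag_sum psi| ^+ 2 / (R * k)%:R.
    by rewrite -probDensityE // hD subKr.
  by rewrite natrM; field; rewrite !pnatr_eq0 -!lt0n hR hk.
rewrite sqr_norm_inner_rigid_vec subKr lerBlDr -lerBlDl -mulrBl ler_pdivrMr ?ltr0n //.
rewrite [_ * R%:R]mulrC mulrA.
set S := diag_sum psi; set T := \sum_u _.
have dist : `|S| - `|S - T| <= `|T| by have := lerB_dist S (S - T); rewrite subKr.
apply: (sqr_subr_sqr_le _ _ _ _ _ dist);
  rewrite ?mismatch_le1 ?mismatch_ge0 ?normr_ge0 ?norm_diag_sum_sqr_le //.
exact/norm_diag_sum_subr_sqr_le/argmax_ampP.
Qed.
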